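(* Let $(B,\mathcal{H})$ be a covering of the point $k$, i.e. $\mathcal{H}=(\mathcal{H}_L,\mathcal{H}_R,S)$ is a finitely generated projective Hopf algebroid over $k$ with bijective antipode, and $k\subseteq B$ is a right $\mathcal{H}$-Galois extension with $B$ finitely generated projective over $k$. Then $\mathcal{H}_L$ and $\mathcal{H}_R$ are Hopf algebras over $k$ (i.e. their underlying bialgebroids are $k$-bialgebras admitting antipodes $S_L,S_R$), and they are coupled Hopf algebras with coupling map $S$. In particular $\mathcal{H}$ is the Hopf algebroid associated with a pair of coupled Hopf algebras.
   Context: $k$ is a commutative unital ring. A Hopf algebroid over $R$ is a triple $(\mathcal{H}_L,\mathcal{H}_R,S)$ of a left $R^{op}$-bialgebroid $(H,s_L,t_L,\Delta_L,\epsilon_L)$ and a right $R$-bialgebroid $(H,s_R,t_R,\Delta_R,\epsilon_R)$ on the same $k$-algebra $H$ together with a bijective antipode $S$, satisfying the standard compatibility conditions (compatible sources/targets/counits, commuting coproducts $(\Delta_L\otimes\mathrm{id})\Delta_R=(\mathrm{id}\otimes\Delta_R)\Delta_L$ etc., $S(t_L(l)ht_R(r))=s_R(r)S(h)s_L(l)$, $\mu_L(S\otimes\mathrm{id})\Delta_L=s_R\epsilon_R$, $\mu_R(\mathrm{id}\otimes S)\Delta_R=s_L\epsilon_L$). An extension $A\subseteq B$ is right $\mathcal{H}$-Galois if $B$ is a right $\mathcal{H}$-comodule algebra (compatible coactions of both bialgebroids) with coinvariants $A$ and bijective Galois map $B\otimes_AB\to B\otimes_R H$, $a\otimes b\mapsto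 ab^{[0]}\otimes b^{[1]}$. Coupled Hopf algebras: two Hopf algebra structures $H_1=(H,m_1,\eta_1,\Delta_1,\epsilon_1,S_1)$ and $H_2=(H,m_2,\eta_2,\Delta_2,\epsilon_2,S_2)$ on the same $k$-module $H$ are coupled if there is a $k$-linear map $C:H\to H$ (the coupling map) with $m_1(C\otimes\mathrm{id})\Delta_1=\eta\epsilon_2$ and $m_2(\mathrm{id}\otimes C)\Delta_2=\eta\epsilon_1$, and the coproducts $\Delta_1,\Delta_2$ commute ($(\Delta_1\otimes\mathrm{id})\Delta_2=(\mathrm{id}\otimes\Delta_2)\Delta_1$ and $(\Delta_2\otimes\mathrm{id})\Delta_1=(\mathrm{id}\otimes\Delta_1)\Delta_2$). Such a pair defines a Hopf algebroid over $k$ with left bialgebroid $H_1$, right bialgebroid $H_2$ and antipode $C$. *)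

From HB Require Import structures.
From mathcomp Require Import all_boot all_order all_algebra.
Set Implicit Arguments. Unset Strict Implicit. Unset Printing Implicit Defensive.
Import GRing.Theory.
Local Open Scope ring_scope.

(* An element of M (x)_k N is represented by a formal finite sum            *)
(* sum_i m_i (x) n_i, i.e. a list of pairs.  Two formal sums denote the     *)
(* same tensor iff they have the same image under every k-bilinear map out  *)
(* of M x N (universal property of the tensor product).  A map into a       *)
(* tensor product is represented by a function choosing representatives.    *)
Section Tensor.
Variable k : comPzRingType.

Definition tens (M N : Type) := seq (M * N).
Definition tens3 (M N P : Type) := seq (M * N * P).

Definition is_linear (M N : lmodType k) (f : M -> N) :=
  forall (a : k) (x y : M), f (a *: x + y) = a *: f x + f y.

Definition is_klinear (M : lmodType k) (f : M -> k) :=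
  forall (a : k) (x y : M), f (a *: x + y) = a * f x + f y.

Definition bilinear_map (M N P : lmodType k) (f : M -> N -> P) :=
  (forall n, is_linear (fun m => f m n)) /\ (forall m, is_linear (f m)).

Definition trilinear_map (M N P Q : lmodType k) (f : M -> N -> P -> Q) :=
  [/\ forall n p, is_linear (fun m => f m n p),
      forall m p, is_linear (fun n => f m n p) &
      forall m n, is_linear (f m n)].

Definition tapp (M N P : lmodType k) (f : M -> N -> P) (t : tens M N) : P :=
  \sum_(p <- t) f p.1 p.2.
Definition tapp3 (M N P Q : lmodType k) (f : M -> N -> P -> Q)
  (t : tens3 M N P) : Q := \sum_(p <- t) f p.1.1 p.1.2 p.2.

Definition teq (M N : lmodType k) (t u : tens M N) : Prop :=
  forall (Q : lmodType k) (f : M -> N -> Q), bilinear_map f -> tapp f t = tapp f u.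
Definition teq3 (M N P : lmodType k) (t u : tens3 M N P) : Prop :=
  forall (Q : lmodType k) (f : M -> N -> P -> Q), trilinear_map f ->
    tapp3 f t = tapp3 f u.

(* k-module operations on formal sums: a * t, t + u is concatenation *)
Definition tscale (M N : lmodType k) (a : k) (t : tens M N) : tens M N :=
  [seq (a *: p.1, p.2) | p <- t].

Definition tlinear (M N P : lmodType k) (d : M -> tens N P) :=
  forall (a : k) (x y : M), teq (d (a *: x + y)) (tscale a (d x) ++ d y).

(* (d (x) id) t and (id (x) d) t *)
Definition tmap_l (M N M1 M2 : Type) (d : M -> tens M1 M2) (t : tens M N)
  : tens3 M1 M2 N := flatten [seq [seq (q.1, q.2, p.2) | q <- d p.1] | p <- t].
Definition tmap_r (M N N1 N2 : Type) (d : N -> tens N1 N2) (t : tens M N)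
  : tens3 M N1 N2 := flatten [seq [seq (p.1, q.1, q.2) | q <- d p.2] | p <- t].

Definition tmul (A C : pzRingType) (t : tens A C) (u : tens A C) : tens A C :=
  [seq (p.1 * q.1, p.2 * q.2) | p <- t, q <- u].

End Tensor.

Section Algebraic.
Variable k : comPzRingType.

Definition eta (H : algType k) (r : k) : H := r *: 1.

Definition fg_projective (M : lmodType k) :=
  exists (n : nat) (i : M -> 'rV[k]_n) (p : 'rV[k]_n -> M),
    [/\ is_linear i, is_linear p & forall m, p (i m) = m].

Definition is_bialgebra (H : algType k) (D : H -> tens H H) (e : H -> k) :=
  [/\ tlinear D /\ is_klinear e,
      forall h, teq3 (tmap_l D (D h)) (tmap_r D (D h)),
      (forall h, tapp (fun x y => e x *: y) (D h) = h /\
                 tapp (fun x y => e y *: x) (D h) = h),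
      teq (D 1) [:: (1, 1)] /\ (forall x y, teq (D (x * y)) (tmul (D x) (D y))) &
      e 1 = 1 /\ (forall x y, e (x * y) = e x * e y)].

Definition is_antipode (H : algType k) (D : H -> tens H H) (e : H -> k)
  (S : H -> H) :=
  [/\ is_linear S,
      forall h, tapp (fun x y => S x * y) (D h) = eta H (e h) &
      forall h, tapp (fun x y => x * S y) (D h) = eta H (e h)].

Definition is_hopf_algebra (H : algType k) (D : H -> tens H H) (e : H -> k)
  (S : H -> H) := is_bialgebra D e /\ is_antipode D e S.

Definition coupled (H : algType k) (D1 : H -> tens H H) (e1 : H -> k)
  (D2 : H -> tens H H) (e2 : H -> k) (C : H -> H) :=
  [/\ is_linear C,
      forall h, tapp (fun x y => C x * y) (D1 h) = eta H (e2 h),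
      forall h, tapp (fun x y => x * C y) (D2 h) = eta H (e1 h),
      forall h, teq3 (tmap_l D1 (D2 h)) (tmap_r D2 (D1 h)) &
      forall h, teq3 (tmap_l D2 (D1 h)) (tmap_r D1 (D2 h))].

(* Source and target maps are k-algebra maps k -> H, hence all equal to    *)
(* eta; then H (x)_R H = H (x)_k H and the Takeuchi product is H (x)_k H.   *)

Definition is_left_bialgebroid (H : algType k) (D : H -> tens H H) (e : H -> k) :=
  [/\ tlinear D /\ is_klinear e,
      forall h, teq3 (tmap_l D (D h)) (tmap_r D (D h)),
      (forall h, tapp (fun x y => e x *: y) (D h) = h /\
                 tapp (fun x y => e y *: x) (D h) = h),
      teq (D 1) [:: (1, 1)] /\ (forall x y, teq (D (x * y)) (tmul (D x) (D y))) &
      (* eps(1) = 1, eps(h h') = eps(h s(eps h')) = eps(h t(eps h')) *)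
      e 1 = 1 /\ (forall x y, e (x * y) = e (x * eta H (e y)))].

Definition is_right_bialgebroid (H : algType k) (D : H -> tens H H) (e : H -> k) :=
  [/\ tlinear D /\ is_klinear e,
      forall h, teq3 (tmap_l D (D h)) (tmap_r D (D h)),
      (forall h, tapp (fun x y => e x *: y) (D h) = h /\
                 tapp (fun x y => e y *: x) (D h) = h),
      teq (D 1) [:: (1, 1)] /\ (forall x y, teq (D (x * y)) (tmul (D x) (D y))) &
      (* eps(1) = 1, eps(h h') = eps(s(eps h) h') = eps(t(eps h) h') *)
      e 1 = 1 /\ (forall x y, e (x * y) = e (eta H (e x) * y))].

Definition is_hopf_algebroid (H : algType k) (DL : H -> tens H H) (eL : H -> k)
  (DR : H -> tens H H) (eR : H -> k) (S : H -> H) :=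
  [/\ is_left_bialgebroid DL eL /\ is_right_bialgebroid DR eR,
      (* compatibility of sources, targets and counits (all s, t = eta) *)
      forall r, eta H (eL (eta H r)) = eta H r /\ eta H (eR (eta H r)) = eta H r,
      (forall h, teq3 (tmap_l DL (DR h)) (tmap_r DR (DL h))) /\
      (forall h, teq3 (tmap_l DR (DL h)) (tmap_r DL (DR h))),
      (* S is a bijective k-module map with S(t_L(l) h t_R(r)) = s_R(r) S(h) s_L(l) *)
      [/\ is_linear S, bijective S &
          forall l r h, S (eta H l * h * eta H r) = eta H r * S h * eta H l] &
      (forall h, tapp (fun x y => S x * y) (DL h) = eta H (eR h)) /\
      (forall h, tapp (fun x y => x * S y) (DR h) = eta H (eL h))].

Definition is_comodule_algebra (H B : algType k) (D : H -> tens H H) (e : H -> k)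
  (rho : B -> tens B H) :=
  [/\ tlinear rho,
      forall b, teq3 (tmap_l rho (rho b)) (tmap_r D (rho b)),
      forall b, tapp (fun c h => e h *: c) (rho b) = b,
      teq (rho 1) [:: (1, 1)] &
      forall b c, teq (rho (b * c)) (tmul (rho b) (rho c))].

Definition is_H_comodule_algebra (H B : algType k) (DL : H -> tens H H)
  (eL : H -> k) (DR : H -> tens H H) (eR : H -> k)
  (rhoL rhoR : B -> tens B H) :=
  [/\ is_comodule_algebra DL eL rhoL, is_comodule_algebra DR eR rhoR,
      forall b, teq3 (tmap_l rhoR (rhoL b)) (tmap_r DL (rhoR b)) &
      forall b, teq3 (tmap_l rhoL (rhoR b)) (tmap_r DR (rhoL b))].

Definition coinvariant (H B : algType k) (rhoR : B -> tens B H) (b : B) :=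
  teq (rhoR b) [:: (b, 1)].

(* Galois map  B (x)_k B -> B (x)_k H, a (x) b |-> a b^[0] (x) b^[1] *)
Definition galois_map (H B : algType k) (rhoR : B -> tens B H) (t : tens B B)
  : tens B H := flatten [seq [seq (p.1 * q.1, q.2) | q <- rhoR p.2] | p <- t].

(* k (= image of eta) subset B is a right H-Galois extension *)
Definition is_galois_over_k (H B : algType k) (DL : H -> tens H H)
  (eL : H -> k) (DR : H -> tens H H) (eR : H -> k)
  (rhoL rhoR : B -> tens B H) :=
  [/\ is_H_comodule_algebra DL eL DR eR rhoL rhoR,
      injective (eta B) /\
      (forall b, coinvariant rhoR b <-> exists r, b = eta B r),
      (forall t u, teq (galois_map rhoR t) (galois_map rhoR u) -> teq t u) &
      (forall v, exists t, teq (galois_map rhoR t) v)].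

End Algebraic.

(* Over the base k every source and target map is a k-algebra map k -> H,
   i.e. the unit eta.  Both bialgebroids are
   then k-bialgebras, and writing
   Delta_R h = h^(1) (x) h^(2), the map S_L h = eps_L(h^(1)) S(h^(2)) is an
   antipode of H_L: the commutation of Delta_L and Delta_R moves S past
   Delta_L, after which mu_L (S (x) id) Delta_L = eta eps_R, resp.
   mu_R (id (x) S) Delta_R = eta eps_L, and counitality finish the computation.
   Symmetrically S_R h = eps_R(h_(2)) S(h_(1)) with Delta_L h = h_(1) (x) h_(2).
   The coupling conditions for S are axioms of the Hopf algebroid. *)
From Pilot Require Import Defs.
From HB Require Import structures.
From mathcomp Require Import all_boot all_order all_algebra.
Local Open Scope ring_scope.
Import GRing.Theory.

Set Implicit Arguments.
Unset Strict Implicit.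
Unset Printing Implicit Defensive.

Section Linearity.
Variable k : comPzRingType.
Implicit Types (M N P : lmodType k).

Lemma klinear0 M (e : M -> k) : is_klinear e -> e 0 = 0.
Proof.
move=> e_lin; have := e_lin 1 0 0; rewrite scale1r addr0 mul1r => e00.
by apply: (@addrI _ (e 0)); rewrite -e00 addr0.
Qed.

Lemma klinearD M (e : M -> k) : is_klinear e -> {morph e : x y / x + y}.
Proof. by move=> e_lin x y; have := e_lin 1 x y; rewrite scale1r mul1r. Qed.

Lemma klinearZ M (e : M -> k) a : is_klinear e -> {morph e : x / a *: x >-> a * x}.
Proof. by move=> e_lin x; have := e_lin a x 0; rewrite addr0 (klinear0 e_lin) addr0. Qed.

Lemma klinear_sum M (e : M -> k) : is_klinear e ->
  forall I (s : seq I) (F : I -> M), e (\sum_(i <- s) F i) = \sum_(i <- s) e (F i).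
Proof.
move=> e_lin I s F; elim: s => [|i s IHs]; first by rewrite !big_nil (klinear0 e_lin).
by rewrite !big_cons (klinearD e_lin) IHs.
Qed.

Lemma is_linear0 M N (f : M -> N) : is_linear f -> f 0 = 0.
Proof.
move=> f_lin; have := f_lin 1 0 0; rewrite !scale1r addr0 => f00.
by apply: (@addrI _ (f 0)); rewrite -f00 addr0.
Qed.

Lemma is_linearD M N (f : M -> N) : is_linear f -> {morph f : x y / x + y}.
Proof. by move=> f_lin x y; have := f_lin 1 x y; rewrite !scale1r. Qed.

Lemma is_linearZ M N (f : M -> N) a : is_linear f -> {morph f : x / a *: x}.
Proof. by move=> f_lin x; have := f_lin a x 0; rewrite addr0 (is_linear0 f_lin) addr0. Qed.

Lemma is_linear_sum M N (f : M -> N) : is_linear f ->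
  forall I (s : seq I) (F : I -> M), f (\sum_(i <- s) F i) = \sum_(i <- s) f (F i).
Proof.
move=> f_lin I s F; elim: s => [|i s IHs]; first by rewrite !big_nil (is_linear0 f_lin).
by rewrite !big_cons (is_linearD f_lin) IHs.
Qed.

Lemma is_linear_comp M N P (g : N -> P) (f : M -> N) :
  is_linear g -> is_linear f -> is_linear (fun x => g (f x)).
Proof. by move=> g_lin f_lin a x y; rewrite f_lin g_lin. Qed.

Lemma is_linear_scale_klinear M N (e : M -> k) (v : N) :
  is_klinear e -> is_linear (fun x => e x *: v).
Proof. by move=> e_lin a x y; rewrite e_lin scalerDl scalerA. Qed.

Lemma is_linear_scaler M N (f : M -> N) (c : k) :
  is_linear f -> is_linear (fun x => c *: f x).
Proof. by move=> f_lin a x y; rewrite f_lin scalerDr !scalerA mulrC. Qed.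

Lemma mul_bilinear (A : algType k) : bilinear_map (@GRing.mul A).
Proof.
split=> [w|w] a x y; first by rewrite mulrDl scalerAl.
by rewrite mulrDr scalerAr.
Qed.

Lemma mul_rev_bilinear (A : algType k) : bilinear_map (fun x y : A => y * x).
Proof. by have [mul_l mul_r] := mul_bilinear A; split. Qed.

End Linearity.

Section FormalTensors.
Variable k : comPzRingType.
Implicit Types (M N P Q : lmodType k).

Definition tflip (M N : Type) (t : tens M N) : tens N M :=
  [seq (p.2, p.1) | p <- t].

Definition trev3 (M N P : Type) (t : tens3 M N P) : tens3 P N M :=
  [seq (p.2, p.1.2, p.1.1) | p <- t].

Lemma tapp_cat M N Q (f : M -> N -> Q) t u :
  tapp f (t ++ u) = tapp f t + tapp f u.
Proof. by rewrite /tapp big_cat. Qed.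

Lemma tapp_scale M N Q (f : M -> N -> Q) a t :
  bilinear_map f -> tapp f (tscale a t) = a *: tapp f t.
Proof.
move=> [f_linl _]; rewrite /tapp big_map scaler_sumr; apply: eq_bigr => p _.
exact: is_linearZ (f_linl p.2) _.
Qed.

Lemma tlinear_tapp M N P Q (d : M -> tens N P) (f : N -> P -> Q) :
  tlinear d -> bilinear_map f -> is_linear (fun h => tapp f (d h)).
Proof. by move=> d_lin f_bilin a x y; rewrite d_lin // tapp_cat tapp_scale. Qed.

Lemma tapp_flip M N Q (f : M -> N -> Q) (t : tens N M) :
  tapp f (tflip t) = tapp (fun x y => f y x) t.
Proof. by rewrite /tapp big_map. Qed.

Lemma tapp3_tmap_l M N M1 M2 Q (d : M -> tens M1 M2) (t : tens M N)
    (f : M1 -> M2 -> N -> Q) :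
  tapp3 f (tmap_l d t) = \sum_(p <- t) \sum_(q <- d p.1) f q.1 q.2 p.2.
Proof.
by rewrite /tapp3 big_flatten big_map; apply: eq_bigr => p _; rewrite big_map.
Qed.

Lemma tapp3_tmap_r M N N1 N2 Q (d : N -> tens N1 N2) (t : tens M N)
    (f : M -> N1 -> N2 -> Q) :
  tapp3 f (tmap_r d t) = \sum_(p <- t) \sum_(q <- d p.2) f p.1 q.1 q.2.
Proof.
by rewrite /tapp3 big_flatten big_map; apply: eq_bigr => p _; rewrite big_map.
Qed.

Lemma tmap_l_flip (M N P : Type) (d : N -> tens M P) (t : tens P N) :
  tmap_l (fun x => tflip (d x)) (tflip t) = trev3 (tmap_r d t).
Proof.
rewrite /tmap_l /tmap_r /trev3 /tflip map_flatten -!map_comp; congr flatten.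
by apply: eq_map => p /=; rewrite -!map_comp; apply: eq_map.
Qed.

Lemma tmap_r_flip (M N P : Type) (d : N -> tens M P) (t : tens N P) :
  tmap_r (fun x => tflip (d x)) (tflip t) = trev3 (tmap_l d t).
Proof.
rewrite /tmap_l /tmap_r /trev3 /tflip map_flatten -!map_comp; congr flatten.
by apply: eq_map => p /=; rewrite -!map_comp; apply: eq_map.
Qed.

Lemma teq3_rev3 M N P (t u : tens3 M N P) : teq3 t u -> teq3 (trev3 t) (trev3 u).
Proof.
move=> tu Q f [f_lin1 f_lin2 f_lin3].
have rev3E v : tapp3 f (trev3 v) = tapp3 (fun a b c => f c b a) v.
  by rewrite /tapp3 big_map.
by rewrite !rev3E; apply: tu; split=> *; [apply: f_lin3 | apply: f_lin2 | apply: f_lin1].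
Qed.

Lemma tlinear_flip M N P (d : M -> tens N P) :
  tlinear d -> tlinear (fun x => tflip (d x)).
Proof.
move=> d_lin a x y Q f [f_linl f_linr].
have f'_bilin : bilinear_map (fun x y => f y x) by [].
rewrite tapp_cat !tapp_flip (d_lin a x y _ _ f'_bilin) tapp_cat tapp_scale //.
by rewrite tapp_scale ?tapp_flip.
Qed.

End FormalTensors.

Definition left_antipode (k : comPzRingType) (H : lmodType k) (eL : H -> k)
    (DR : H -> tens H H) (S : H -> H) (h : H) : H :=
  tapp (fun x y => eL x *: S y) (DR h).

Lemma left_antipode_linear (k : comPzRingType) (H : lmodType k) (eL : H -> k)
    (DR : H -> tens H H) (S : H -> H) :
  is_klinear eL -> tlinear DR -> is_linear S -> is_linear (left_antipode eL DR S).
Proof.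
move=> eL_lin DR_lin S_lin; apply: tlinear_tapp => //; split=> [y|x].
- exact: is_linear_scale_klinear.
- exact: is_linear_scaler.
Qed.

(* The antipode identities only use that the multiplication is bilinear, so
   they are proved for an arbitrary pairing [mu]; this also covers the
   reversed multiplication needed for the antipode of H_R. *)
Section AntipodePairing.
Variables (k : comPzRingType) (H A : lmodType k).
Variables (DL : H -> tens H H) (eL : H -> k) (DR : H -> tens H H) (eR : H -> k).
Variables (S : H -> H) (mu : H -> H -> A) (one : A).

Hypotheses (eL_lin : is_klinear eL) (S_lin : is_linear S) (mu_bilin : bilinear_map mu).

Let SL := left_antipode eL DR S.

Lemma left_antipode_pairl :
  (forall h, tapp (fun x y => eR y *: x) (DR h) = h) ->
  (forall h, teq3 (tmap_l DR (DL h)) (tmap_r DL (DR h))) ->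
  (forall h, tapp (fun x y => mu (S x) y) (DL h) = eR h *: one) ->
  forall h, tapp (fun x y => mu (SL x) y) (DL h) = eL h *: one.
Proof.
move=> DR_counit DR_DL_comm S_pairl h; have [mu_l mu_r] := mu_bilin.
have f_trilin : trilinear_map (fun a b c => eL a *: mu (S b) c).
  split=> *; first exact: is_linear_scale_klinear.
    by apply: is_linear_scaler; apply: is_linear_comp (mu_l _) S_lin.
  exact: is_linear_scaler (mu_r _).
have -> : tapp (fun x y => mu (SL x) y) (DL h)
    = tapp3 (fun a b c => eL a *: mu (S b) c) (tmap_l DR (DL h)).
  rewrite tapp3_tmap_l /tapp; apply: eq_bigr => p _.
  rewrite /SL /left_antipode /tapp (is_linear_sum (mu_l _)); apply: eq_bigr => q _.
  exact: is_linearZ (mu_l _) _.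
rewrite (DR_DL_comm h _ _ f_trilin) tapp3_tmap_r.
transitivity (\sum_(p <- DR h) (eR p.2 * eL p.1) *: one).
  apply: eq_bigr => p _; rewrite -scaler_sumr mulrC -scalerA.
  by have := S_pairl p.2; rewrite /tapp => ->.
rewrite -scaler_suml; congr (_ *: _).
rewrite -[in RHS](DR_counit h) /tapp (klinear_sum eL_lin).
by apply: eq_bigr => p _; rewrite (klinearZ _ eL_lin).
Qed.

Lemma left_antipode_pairr :
  (forall h, tapp (fun x y => eL y *: x) (DL h) = h) ->
  (forall h, teq3 (tmap_l DL (DR h)) (tmap_r DR (DL h))) ->
  (forall h, tapp (fun x y => mu x (S y)) (DR h) = eL h *: one) ->
  forall h, tapp (fun x y => mu x (SL y)) (DL h) = eL h *: one.
Proof.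
move=> DL_counit DL_DR_comm S_pairr h; have [mu_l mu_r] := mu_bilin.
have f_trilin : trilinear_map (fun a b c => eL b *: mu a (S c)).
  split=> *; first exact: is_linear_scaler (mu_l _).
    exact: is_linear_scale_klinear.
  by apply: is_linear_scaler; apply: is_linear_comp (mu_r _) S_lin.
have -> : tapp (fun x y => mu x (SL y)) (DL h)
    = tapp3 (fun a b c => eL b *: mu a (S c)) (tmap_r DR (DL h)).
  rewrite tapp3_tmap_r /tapp; apply: eq_bigr => p _.
  rewrite /SL /left_antipode /tapp (is_linear_sum (mu_r _)); apply: eq_bigr => q _.
  exact: is_linearZ (mu_r _) _.
rewrite -(DL_DR_comm h _ _ f_trilin) tapp3_tmap_l -(S_pairr h) /tapp.
apply: eq_bigr => p _; rewrite -[in RHS](DL_counit p.1) /tapp.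
rewrite (is_linear_sum (mu_l _)); apply: eq_bigr => q _.
by rewrite (is_linearZ _ (mu_l _)).
Qed.

End AntipodePairing.

Section HopfAlgebroidOverThePoint.
Variables (k : comPzRingType) (H : algType k).

Lemma left_bialgebroid_bialgebra (D : H -> tens H H) (e : H -> k) :
  is_left_bialgebroid D e -> is_bialgebra D e.
Proof.
case=> D_lin coass counit D_mul [e1 eM]; split=> //; split=> // x y.
by rewrite eM /Defs.eta -scalerAr mulr1 (klinearZ _ D_lin.2) mulrC.
Qed.

Lemma right_bialgebroid_bialgebra (D : H -> tens H H) (e : H -> k) :
  is_right_bialgebroid D e -> is_bialgebra D e.
Proof.
case=> D_lin coass counit D_mul [e1 eM]; split=> //; split=> // x y.
by rewrite eM /Defs.eta -scalerAl mul1r (klinearZ _ D_lin.2).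
Qed.

Variables (DL : H -> tens H H) (eL : H -> k) (DR : H -> tens H H) (eR : H -> k).
Variable S : H -> H.
Hypothesis HA : is_hopf_algebroid DL eL DR eR S.

Lemma hopf_algebroid_left_antipode : is_antipode DL eL (left_antipode eL DR S).
Proof.
case: HA => [[[[_ eL_lin] _ DL_counit _ _] [[DR_lin _] _ DR_counit _ _]] _
  [DL_DR_comm DR_DL_comm] [S_lin _ _] [S_antipodeL S_antipodeR]].
split; first exact: left_antipode_linear.
- move=> h; apply: (@left_antipode_pairl _ _ _ _ _ _ eR _ *%R 1) => //.
  + exact: mul_bilinear.
  + by move=> x; case: (DR_counit x).
- move=> h; apply: (@left_antipode_pairr _ _ _ _ _ _ _ *%R 1) => //.
  + exact: mul_bilinear.
  + by move=> x; case: (DL_counit x).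
Qed.

(* S_R is S_L built from the co-opposite data: flipped coproducts, reversed
   multiplication and the roles of L and R exchanged. *)
Lemma hopf_algebroid_right_antipode :
  is_antipode DR eR (left_antipode eR (fun h => tflip (DL h)) S).
Proof.
case: HA => [[[[DL_lin _] _ DL_counit _ _] [[_ eR_lin] _ DR_counit _ _]] _
  [DL_DR_comm DR_DL_comm] [S_lin _ _] [S_antipodeL S_antipodeR]].
split; first by apply: left_antipode_linear => //; apply: tlinear_flip.
- move=> h; rewrite -tapp_flip.
  apply: (@left_antipode_pairr _ _ _ (fun h => tflip (DR h)) eR
    (fun h => tflip (DL h)) S (fun a b => b * a) 1) => //.
  + exact: mul_rev_bilinear.
  + by move=> x; rewrite tapp_flip; case: (DR_counit x).
  + move=> x; rewrite tmap_l_flip tmap_r_flip.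
    by apply: teq3_rev3 => Q f /(DL_DR_comm x).
  + by move=> x; rewrite tapp_flip.
- move=> h; rewrite -tapp_flip.
  apply: (@left_antipode_pairl _ _ _ (fun h => tflip (DR h)) eR
    (fun h => tflip (DL h)) eL S (fun a b => b * a) 1) => //.
  + exact: mul_rev_bilinear.
  + by move=> x; rewrite tapp_flip; case: (DL_counit x).
  + move=> x; rewrite tmap_l_flip tmap_r_flip.
    by apply: teq3_rev3 => Q f /(DR_DL_comm x).
  + by move=> x; rewrite tapp_flip.
Qed.

End HopfAlgebroidOverThePoint.

Theorem proposition6 (k : comPzRingType) (H B : algType k)
  (DL : H -> tens H H) (eL : H -> k) (DR : H -> tens H H) (eR : H -> k)
  (S : H -> H) (rhoL rhoR : B -> tens B H) :
  is_hopf_algebroid DL eL DR eR S ->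
  fg_projective H ->
  is_galois_over_k DL eL DR eR rhoL rhoR ->
  fg_projective B ->
  exists SL SR : H -> H,
    [/\ is_hopf_algebra DL eL SL, is_hopf_algebra DR eR SR &
        coupled DL eL DR eR S].
Proof.
move=> HA _ _ _.
have [[HL HR] _ [DL_DR_comm DR_DL_comm] [S_lin _ _] [S_antipodeL S_antipodeR]] := HA.
exists (left_antipode eL DR S), (left_antipode eR (fun h => tflip (DL h)) S); split.
- split; [exact: left_bialgebroid_bialgebra | exact: hopf_algebroid_left_antipode HA].
- split; [exact: right_bialgebroid_bialgebra | exact: hopf_algebroid_right_antipode HA].
- by split.
Qed.
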